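(* Let $n\in\mathbb N$ and let $u$ be real-valued with $u\in C^\infty(\mathbb R)$, $\partial_x^ku\in L^\infty(\mathbb R)$ for $k=0,1,2$, $4u-u_{xx}>0$ on $\mathbb R$, satisfying $\mathrm{s\text{-}CH}_n(u)=0$, with associated polynomial $R_{2n+2}(z)=\prod_{m=0}^{2n+1}(z-E_m)$, $E_0<E_1<\cdots<E_{2n}<E_{2n+1}=0$. Then for all $x\in\mathbb R$, $$4u(x)-u_{xx}(x)=-\Big(\prod_{m=0}^{2n}E_m\Big)\Big(\prod_{j=1}^n\mu_j(x)^{-2}\Big)>0\quad\text{and}\quad 4u(x)+2u_x(x)>0.$$
   Context: Stationary CH formalism. Let $\mathcal G=(-d^2/dx^2+4)^{-1}$, i.e. $(\mathcal Gv)(x)=\frac14\int_{\mathbb R}e^{-2|x-y|}v(y)\,dy$ on $L^\infty(\mathbb R)$. Put $f_0=1$ and for $\ell\ge1$ define $f_\ell$ by $f_{\ell,x}=-2\mathcal G\big(2(4u-u_{xx})f_{\ell-1,x}+(4u_x-u_{xxx})f_{\ell-1}\big)$, $f_\ell$ being fixed up to an additive integration constant $c_\ell$. Set $g_\ell=f_\ell+\frac12f_{\ell,x}$, $h_\ell=(4u-u_{xx})f_\ell-g_{\ell+1,x}$ for $0\le\ell\le n-1$, $h_n=(4u-u_{xx})f_n$, and $F_n(z,x)=\sum_{\ell=0}^nf_{n-\ell}(x)z^\ell$, $G_n$, $H_n$ analogously with $g_\ell$, $h_\ell$. The $n$th stationary CH equation is $\mathrm{s\text{-}CH}_n(u):=(u_{xxx}-4u_x)f_n-2(4u-u_{xx})f_{n,x}=0$;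 when it holds, $R_{2n+2}(z):=z^2G_n(z,x)^2+zF_n(z,x)H_n(z,x)$ is independent of $x$, monic of degree $2n+2$, with $R_{2n+2}(0)=0$. The zeros of the monic polynomial $F_n(\cdot,x)$ are $\mu_1(x),\dots,\mu_n(x)$. *)

From HB Require Import structures.
From mathcomp Require Import all_boot all_order all_algebra.
From mathcomp Require Import all_classical all_reals all_analysis.
From mathcomp Require Import complex.
Set Implicit Arguments. Unset Strict Implicit. Unset Printing Implicit Defensive.
Import Order.TTheory GRing.Theory Num.Theory.
Local Open Scope ring_scope.

Section CH.
Variable R : realType.

Definition dn (k : nat) (u : R -> R) : R -> R := derive1n k u.

(* Green's function of (-d^2/dx^2 + 4):
   (G v)(x) = 1/4 \int_R exp(-2|x-y|) v(y) dy  (Lebesgue integral) *)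
Definition Green (v : R -> R) (x : R) : R :=
  4^-1 * Rintegral (@lebesgue_measure R) setT
           (fun y => expR (-2 * `|x - y|) * v y).

Definition smooth_bdd2 (u : R -> R) : Prop :=
  (forall k x, derivable (dn k u) x 1) /\
  (forall k, (k <= 2)%N -> exists M : R, forall x, `|dn k u x| <= M).

(* f : nat -> R -> R is a family f_0 = 1, and for 1 <= l <= n,
   f_{l,x} = -2 G(2(4u-u_xx) f_{l-1,x} + (4u_x - u_xxx) f_{l-1})
   (each f_l thus fixed up to an additive constant c_l) *)
Definition CH_family (n : nat) (u : R -> R) (f : nat -> R -> R) : Prop :=
  f 0%N = (fun _ => 1) /\
  forall l, (1 <= l <= n)%N -> forall x,
    derivable (f l) x 1 /\
    derive1 (f l) x = -2 * Green (fun y =>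
        2 * (4 * u y - dn 2 u y) * derive1 (f l.-1) y
        + (4 * dn 1 u y - dn 3 u y) * f l.-1 y) x.

Definition gfun (f : nat -> R -> R) (l : nat) (x : R) : R :=
  f l x + 2^-1 * derive1 (f l) x.

Definition hfun (n : nat) (u : R -> R) (f : nat -> R -> R) (l : nat) (x : R) : R :=
  if (l < n)%N then (4 * u x - dn 2 u x) * f l x - derive1 (gfun f l.+1) x
  else (4 * u x - dn 2 u x) * f n x.

Definition Fpoly (n : nat) (f : nat -> R -> R) (x : R) : {poly R} :=
  \sum_(l < n.+1) f (n - l)%N x *: 'X^l.
Definition Gpoly (n : nat) (f : nat -> R -> R) (x : R) : {poly R} :=
  \sum_(l < n.+1) gfun f (n - l)%N x *: 'X^l.
Definition Hpoly (n : nat) (u : R -> R) (f : nat -> R -> R) (x : R) : {poly R} :=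
  \sum_(l < n.+1) hfun n u f (n - l)%N x *: 'X^l.

Definition sCH (n : nat) (u : R -> R) (f : nat -> R -> R) (x : R) : R :=
  (dn 3 u x - 4 * dn 1 u x) * f n x - 2 * (4 * u x - dn 2 u x) * derive1 (f n) x.

Definition Rpoly (n : nat) (u : R -> R) (f : nat -> R -> R) (x : R) : {poly R} :=
  'X^2 * Gpoly n f x ^+ 2 + 'X * Fpoly n f x * Hpoly n u f x.

End CH.

(* The coefficient of [z] in [R_{2n+2}(z) = z^2 G_n^2 + z F_n H_n] is
   [F_n(0,x) H_n(0,x) = (4u - u_xx) f_n^2], while in [prod_m (z - E_m)] with
   [E_{2n+1} = 0] it is [- prod_{m<=2n} E_m]; since [f_n = F_n(0,x) = (-1)^n prod_j mu_j],
   this gives the trace formula.  For the second inequality, [w = 4u + 2u_x] satisfies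
   [(w e^{-2x})' = -2 (4u - u_xx) e^{-2x} < 0]; if [w] were [<= 0] somewhere, then
   [w e^{-2x} <= -c < 0] on a half-line, i.e. [w <= -c e^{2x}] there, contradicting
   the boundedness of [u] and [u_x]. *)
From HB Require Import structures.
From mathcomp Require Import all_boot all_order all_algebra.
From mathcomp Require Import all_classical all_reals all_analysis.
From mathcomp Require Import complex.
From mathcomp Require Import ring lra.
Set Implicit Arguments. Unset Strict Implicit. Unset Printing Implicit Defensive.
Import Order.TTheory GRing.Theory Num.Theory.
Local Open Scope ring_scope.

Lemma lt_last_of_incr (R : numDomainType) (E : nat -> R) k :
  (forall m, (m < k)%N -> E m < E m.+1) -> forall m, (m < k)%N -> E m < E k.
Proof.
move=> incE m ltmk.
have convex : {in [pred i | (i <= k)%N] &,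
    forall i j l, (i < l < j)%N -> l \in [pred i | (i <= k)%N]}.
  by move=> i j _ jk l /andP[_ /ltnW lj]; rewrite inE (leq_trans lj).
apply: (Order.NatMonotonyTheory.homo_ltn_lt_in convex); rewrite ?inE //.
- by move=> i _; rewrite inE; apply: incE.
- exact: ltnW.
Qed.

Lemma coef0_prod_XsubC_ord (T : comNzRingType) k (a : 'I_k -> T) :
  (\prod_(i < k) ('X - (a i)%:P))`_0 = (-1) ^+ k * \prod_(i < k) a i.
Proof.
rewrite coef0_prod (eq_bigr (fun i => - a i)) ?prodrN ?card_ord // => i _.
by rewrite coefB coefX coefC sub0r.
Qed.

Lemma coef1_prod_XsubC_last0 (T : comNzRingType) k (E : nat -> T) :
  E k = 0 ->
  (\prod_(m < k.+1) ('X - (E m)%:P))`_1 = (-1) ^+ k * \prod_(m < k) E m.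
Proof.
by move=> Ek0; rewrite big_ord_recr /= Ek0 subr0 coefMX coef0_prod_XsubC_ord.
Qed.

Lemma derive_lt0_decr (R : realType) (g g' : R -> R) :
  (forall x : R, is_derive x 1 g (g' x)) -> (forall x, g' x < 0) ->
  {homo g : x y /~ x < y}.
Proof.
move=> dg g'lt0 a b ab.
have [c _ gba] := MVT ab (fun x _ => dg x)
  (derivable_within_continuous (fun x _ => @ex_derive _ _ _ _ _ _ _ (dg x))).
by rewrite -subr_lt0 gba pmulr_llt0 ?subr_gt0.
Qed.

Lemma bounded_exp_decr_gt0 (R : realType) (w : R -> R) (a M : R) :
  0 < a -> (forall y, `|w y| <= M) ->
  {homo (fun y => w y * expR (- a * y)) : x y /~ x < y} ->
  forall x, 0 < w x.
Proof.
move=> a_gt0 wM decr x; rewrite ltNge; apply/negP => wx_le0.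
set c := - (w (x + 1) * expR (- a * (x + 1))).
have c_gt0 : 0 < c.
  have x_lt_x1 : x < x + 1 by rewrite ltrDl.
  rewrite oppr_gt0; have /= /lt_le_trans-> // := decr _ _ x_lt_x1.
  exact: mulr_le0_ge0 wx_le0 (ltW (expR_gt0 _)).
(* Beyond [x + 1], [w y e^{-a y} < -c], hence [c e^{a y} < -w y <= M]. *)
have cexp_lt_M (y : R) : x + 1 < y -> c * expR (a * y) < M.
  move=> lty; have ey : expR (- a * y) * expR (a * y) = 1.
    by rewrite -expRD mulNr addNr expR0.
  rewrite -[M]mulr1 -ey mulrA ltr_pM2r ?expR_gt0 //.
  apply: (@lt_le_trans _ _ (- (w y * expR (- a * y)))).
    by rewrite /c ltrN2; exact: decr.
  rewrite -mulNr; apply: ler_wpM2r; first exact/ltW/expR_gt0.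
  by apply: le_trans (wM y); rewrite -normrN ler_norm.
(* At this [y], already [c (1 + a y) > M], and [1 + a y <= e^{a y}]. *)
set y : R := Order.max (x + 2) (M / (a * c)).
have Mc_le_ay : M / c <= a * y.
  have -> : M / c = a * (M / (a * c)) by field; rewrite -/c !gt_eqF.
  by rewrite ler_pM2l // /y le_max lexx orbT.
have cMc : c * (M / c) = M by rewrite mulrC divfK ?gt_eqF.
have ey := expR_ge1Dx (a * y).
have := cexp_lt_M y; rewrite lt_max ltrD2l ltr1n /= => /(_ isT).
nra.
Qed.

Section Positivity4uPlus2ux.
Variables (R : realType) (u : R -> R).
Hypothesis smooth_u : smooth_bdd2 u.

Lemma is_derive_dn (k : nat) (x : R) : is_derive x 1 (dn k u) (dn k.+1 u x).
Proof. by have := derivableP (smooth_u.1 k x); rewrite -derive1E. Qed.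

Lemma is_derive_4u_2ux_exp (x : R) :
  is_derive x 1 (fun y => (4 * u y + 2 * dn 1 u y) * expR (-2 * y))
    (- 2 * (4 * u x - dn 2 u x) * expR (-2 * x)).
Proof.
have dw : is_derive x 1 (fun y => 4 * u y + 2 * dn 1 u y)
    (4 * dn 1 u x + 2 * dn 2 u x).
  exact: is_deriveD (is_deriveZ 4 (is_derive_dn 0 x))
                    (is_deriveZ 2 (is_derive_dn 1 x)).
have dlin : is_derive x 1 (fun y : R => -2 * y) (-2).
  by have := is_deriveZ (-2) (is_derive_id x (1 : R)); rewrite scaler1.
have dexp := is_derive1_comp (is_derive_expR (-2 * x)) dlin.
apply: is_derive_eq (is_deriveM dw dexp) _.
rewrite /dn /= -![_ *: _]/(_ * _); ring.
Qed.

Lemma bounded_4u_2ux : exists M, forall y, `|4 * u y + 2 * dn 1 u y| <= M.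
Proof.
have [M0 bound0] := smooth_u.2 0%N isT.
have [M1 bound1] := smooth_u.2 1%N isT.
exists (4 * M0 + 2 * M1) => y; apply: le_trans (ler_normD _ _) _.
by rewrite !normrM !normr_nat lerD // ler_wpM2l.
Qed.

Lemma gt0_4u_2ux :
  (forall x, 0 < 4 * u x - dn 2 u x) -> forall x, 0 < 4 * u x + 2 * dn 1 u x.
Proof.
move=> gt0_4u_uxx; have [M bound] := bounded_4u_2ux.
apply: (@bounded_exp_decr_gt0 R _ 2 M) bound _ => //.
apply: derive_lt0_decr is_derive_4u_2ux_exp _ => x.
by rewrite -mulrA mulNr oppr_lt0 !mulr_gt0 ?expR_gt0.
Qed.

End Positivity4uPlus2ux.

Section TraceFormula.
Variables (R : realType) (n : nat) (u : R -> R) (f : nat -> R -> R) (x : R).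

Lemma coef0_Fpoly : (Fpoly n f x)`_0 = f n x.
Proof.
rewrite /Fpoly coef_sum big_ord_recl /= coefZ coefXn mulr1 subn0.
by rewrite big1 ?addr0 // => i _; rewrite coefZ coefXn mulr0.
Qed.

Lemma coef0_Hpoly : (Hpoly n u f x)`_0 = (4 * u x - dn 2 u x) * f n x.
Proof.
rewrite /Hpoly coef_sum big_ord_recl /= coefZ coefXn mulr1 subn0 /hfun ltnn.
by rewrite big1 ?addr0 // => i _; rewrite coefZ coefXn mulr0.
Qed.

Lemma coef1_Rpoly : (Rpoly n u f x)`_1 = (4 * u x - dn 2 u x) * f n x ^+ 2.
Proof.
rewrite /Rpoly coefD coefXnM add0r -mulrA coefXM coef0M coef0_Fpoly coef0_Hpoly.
by rewrite mulrCA -expr2.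
Qed.

Lemma mul_4u_uxx_fn_sqr (E : nat -> R) :
  Rpoly n u f x = \prod_(m < n.*2.+2) ('X - (E m)%:P) -> E n.*2.+1 = 0 ->
  (4 * u x - dn 2 u x) * f n x ^+ 2 = - \prod_(m < n.*2.+1) E m.
Proof.
move=> RE E0; rewrite -coef1_Rpoly RE coef1_prod_XsubC_last0 //.
by rewrite -signr_odd /= odd_double mulN1r.
Qed.

End TraceFormula.

Theorem mainTheorem4 (R : realType) (n : nat) (u : R -> R)
  (f : nat -> R -> R) (E : nat -> R) :
  smooth_bdd2 u ->
  (forall x, 0 < 4 * u x - dn 2 u x) ->
  CH_family n u f ->
  (forall x, sCH n u f x = 0) ->
  (forall x, Rpoly n u f x = \prod_(m < n.*2.+2) ('X - (E m)%:P)) ->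
  (forall m, (m < n.*2.+1)%N -> E m < E m.+1) ->
  E n.*2.+1 = 0 ->
  forall (x : R) (mu : 'I_n -> R[i]),
    map_poly (fun c : R => (c%:C)%C) (Fpoly n f x) = \prod_(j < n) ('X - (mu j)%:P) ->
    (((4 * u x - dn 2 u x)%:C)%C
       = - ((\prod_(m < n.*2.+1) E m)%:C)%C * \prod_(j < n) (mu j) ^- 2
     /\ 0 < 4 * u x - dn 2 u x)
    /\ 0 < 4 * u x + 2 * dn 1 u x.
Proof.
(* The recursion for [f] and [s-CH_n(u) = 0] enter only through the factorization of [R_{2n+2}]. *)
move=> smooth_u gt0_4u_uxx _ _ RE incE E0 x mu Fmu.
split; last exact: gt0_4u_2ux.
split; last exact: gt0_4u_uxx.
have trace := mul_4u_uxx_fn_sqr (RE x) E0.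
have prodE_neq0 : \prod_(m < n.*2.+1) E m != 0.
  by apply/prodf_neq0 => m _; rewrite ltr0_neq0 // -E0 lt_last_of_incr.
have fn_neq0 : f n x != 0.
  by apply: contra prodE_neq0 => /eqP fn0; rewrite -oppr_eq0 -trace fn0 expr0n mulr0.
have fn_mu : ((f n x)%:C)%C = (-1) ^+ n * \prod_(j < n) mu j.
  by have := congr1 (coefp 0) Fmu; rewrite /= coef_map /= coef0_Fpoly coef0_prod_XsubC_ord.
have -> : \prod_(j < n) mu j ^- 2 = (((f n x)%:C)%C ^+ 2)^-1.
  by rewrite prodfV prodrXl fn_mu exprMn -exprM mulnC exprM sqrrN !expr1n mul1r.
rewrite -rmorphXn -fmorphV -rmorphN -rmorphM -trace.
by rewrite mulfK ?expf_neq0.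
Qed.
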